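(* Let $(X,M,N)$ be a localizable enhanced measurable space. Composition with the quotient map $M\to M/N$ is a bijection from the set of (complex) continuous valuations on the Boolean algebra $M/N$ onto the set of finite essential measures on $(X,M,N)$.
   Context: Enhanced measurable space: $(X,M,N)$ with $M$ a $\sigma$-algebra on $X$ and $N\subset M$ closed under arbitrary subsets and countable unions; localizable if $M/N$ is complete and $1$ is the supremum of all $a\in M/N$ such that $\{b\le a\}$ admits a faithful $[0,\infty)$-valued continuous valuation. A complex valuation on a lattice $L$ is $\nu:L\to\mathbb{C}$ with $\nu(0)=0$, $\nu(x)+\nu(y)=\nu(x\vee y)+\nu(x\wedge y)$; continuous if $\nu(\sup I)=\lim_{x\in I}\nu(x)$ for directed $I$. A finite measure is a countably additive map $\mu:M\to\mathbb{C}$ vanishing on $N$; $\mu|_m$ is its restriction to measurable subsets of $m$. $m\in M$ is $\sigma$-finite if the induced space on $m$ admits a finite measure $\nu$ with $\nu|_{m''}=0\Rightarrow m''\in N$. A finite measure $\mu$ is essential if for every $m\in M$ with $\mu|_m\neq0$ there is a $\sigma$-finite $m'\in M$, $m'\subset m$, with $\mu|_{m'}\ne0$. *)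

From mathcomp Require Import all_boot all_order all_algebra.
From mathcomp Require Import boolp classical_sets reals measurable_structure.
From mathcomp Require Import complex.
Set Implicit Arguments. Unset Strict Implicit. Unset Printing Implicit Defensive.
Import Order.TTheory GRing.Theory Num.Theory.
Local Open Scope classical_set_scope.
Local Open Scope ring_scope.

Section EMS.
Context {X : Type}.

Definition enhanced (M N : set (set X)) : Prop :=
  [/\ sigma_algebra setT M,
      N `<=` M,
      (forall n s, N n -> s `<=` n -> N s),
      N set0 &
      (forall F : nat -> set X, (forall k, N (F k)) -> N (\bigcup_k F k))].

Definition Msub (M : set (set X)) := {A : set X | M A}.

Definition symdiff (A B : set X) : set X := (A `\` B) `|` (B `\` A).

Definition cls (M N : set (set X)) (m : set X) : set (set X) :=
  [set m' | M m' /\ N (symdiff m m')].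

Definition MN (M N : set (set X)) :=
  {C : set (set X) | exists m, M m /\ C = cls M N m}.

Definition qmap (M N : set (set X)) (m : Msub M) : MN M N :=
  exist _ (cls M N (proj1_sig m)) (ex_intro _ (proj1_sig m) (conj (proj2_sig m) erefl)).

Definition mnle (M N : set (set X)) (a b : MN M N) : Prop :=
  exists ma mb, proj1_sig a ma /\ proj1_sig b mb /\ N (ma `\` mb).

Section Lattice.
Variables (M N : set (set X)).
Local Notation L := (MN M N).
Local Notation le := (@mnle M N).

Definition is_lub (x y j : L) := [/\ le x j, le y j & forall z, le x z -> le y z -> le j z].
Definition is_glb (x y m : L) := [/\ le m x, le m y & forall z, le z x -> le z y -> le z m].
Definition is_sup (S : set L) (s : L) :=
  (forall x, S x -> le x s) /\ (forall z, (forall x, S x -> le x z) -> le s z).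
Definition is_bot (z : L) := forall a, le z a.
Definition is_top (t : L) := forall a, le a t.
Definition directed (S : set L) :=
  (exists x, S x) /\ forall x y, S x -> S y -> exists z, [/\ S z, le x z & le y z].
Definition downset (a : L) : set L := [set b | le b a].

Definition net_cvg {K : numFieldType} (I : set L) (f : L -> K) (l : K) :=
  forall e : K, 0 < e -> exists x0, I x0 /\
    forall x, I x -> le x0 x -> `|f x - l| < e.

(** f is a valuation on the sublattice D (D is a down-set or all of L). *)
Definition valuation_on {K : numFieldType} (D : set L) (f : L -> K) :=
  (forall z, is_bot z -> f z = 0) /\
  (forall x y j m, D x -> D y -> is_lub x y j -> is_glb x y m ->
     f x + f y = f j + f m).

Definition continuous_on {K : numFieldType} (D : set L) (f : L -> K) :=
  forall (I : set L) s, I `<=` D -> directed I -> is_sup I s -> net_cvg I f (f s).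

Definition continuous_valuation {K : numFieldType} (f : L -> K) :=
  valuation_on setT f /\ continuous_on setT f.

End Lattice.

Definition localizable (R : realType) (M N : set (set X)) : Prop :=
  [/\ enhanced M N,
      (forall S : set (MN M N), exists s, is_sup S s) &
      (forall t, is_top t ->
        is_sup [set a : MN M N | exists f : MN M N -> R,
                  [/\ (forall b, mnle b a -> 0 <= f b),
                      valuation_on (downset a) f,
                      continuous_on (downset a) f &
                      (forall b, mnle b a -> f b = 0 -> is_bot b)]] t)].
End EMS.

Definition finite_measure {X : Type} {K : numFieldType} (M N : set (set X))
    (mu : Msub M -> K) : Prop :=
  (forall m : Msub M, N (proj1_sig m) -> mu m = 0) /\
  (forall (A : nat -> Msub M) (U : Msub M),
     (forall i j, i != j -> proj1_sig (A i) `&` proj1_sig (A j) = set0) ->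
     proj1_sig U = \bigcup_n proj1_sig (A n) ->
     forall e : K, 0 < e -> exists n0, forall n, (n0 <= n)%N ->
       `|\sum_(i < n) mu (A i) - mu U| < e).

Definition sub_type {X : Type} (m : set X) := {x : X | m x}.
Definition induced_M {X : Type} (M : set (set X)) (m : set X) : set (set (sub_type m)) :=
  [set A | M ((@proj1_sig X m) @` A)].
Definition induced_N {X : Type} (N : set (set X)) (m : set X) : set (set (sub_type m)) :=
  [set A | N ((@proj1_sig X m) @` A)].

Arguments induced_M {X} M m.
Arguments finite_measure {X K} M N mu.
Arguments qmap {X} M N m.
Arguments cls {X} M N m.
Arguments induced_N {X} N m.

Definition restr_zero {X : Type} {K : numFieldType} (M : set (set X))
    (mu : Msub M -> K) (m : set X) : Prop :=
  forall a : Msub M, proj1_sig a `<=` m -> mu a = 0.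

Definition sigma_finite_set {X : Type} (R : realType) (M N : set (set X)) (m : set X) : Prop :=
  exists nu : Msub (induced_M M m) -> R[i],
    finite_measure (induced_M M m) (induced_N N m) nu /\
    forall m'' : Msub (induced_M M m),
      restr_zero nu (proj1_sig m'') -> induced_N N m (proj1_sig m'').

Definition essential {X : Type} (R : realType) (M N : set (set X)) (mu : Msub M -> R[i]) : Prop :=
  forall m : Msub M, ~ restr_zero mu (proj1_sig m) ->
    exists m' : Msub M, [/\ proj1_sig m' `<=` proj1_sig m,
       sigma_finite_set R M N (proj1_sig m') & ~ restr_zero mu (proj1_sig m')].

Arguments essential {X} R M N mu.
Arguments sigma_finite_set {X} R M N m.
Arguments localizable {X} R M N.

From Pilot Require Import Defs.
From HB Require Import structures.
From mathcomp Require Import all_boot all_order all_algebra.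
From mathcomp Require Import boolp classical_sets reals measurable_structure complex.
From mathcomp Require Import ereal normedtype sequences measure charge.
From mathcomp Require Import lra ring.
Set Implicit Arguments. Unset Strict Implicit. Unset Printing Implicit Defensive.
Import Order.TTheory GRing.Theory Num.Theory.
Import numFieldNormedType.Exports.
Local Open Scope classical_set_scope.
Local Open Scope ring_scope.
Local Open Scope complex_scope.

(* A continuous valuation nu on M/N gives the measure nu \o qmap: countable
   additivity is continuity along the directed family of finite partial unions.
   It is essential: by localizability the top of M/N is the supremum of the
   classes y carrying a faithful positive continuous valuation; if nu vanished
   below every [A] /\ y, continuity along the directed family of nu-null
   subclasses of [A] would force nu [A] = 0, and a piece A /\ rep y on which nu
   does not vanish is sigma-finite, witnessed by the faithful valuation of y.
   Conversely a finite measure mu is N-invariant, so mu \o rep is a valuation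
   inducing mu. For continuity along a directed I with supremum s, dominate |mu|
   by a positive control measure rho (the total variations of Re mu and Im mu)
   and exhaust rep s, up to a set W, by an increasing sequence of members of I
   that is rho-maximal. Were mu to charge rep s \ W, essentiality would give a
   sigma-finite piece G of it; exhausting G in the same way for its faithful
   measure covers G by members of I up to a null set, and inside every member
   of I the remainder rep s \ W carries no mass. Hence rho (rep s \ W) = 0, and
   continuity from below of rho gives the estimate. Uniqueness holds because
   qmap is onto. *)

Ltac set_tauto := let t := fresh "t" in
  move=> t; rewrite /symdiff /=; apply: contrapT; tauto.
Ltac set_eq_tauto := apply/seteqP; split; set_tauto.

(* Convergence in the epsilon-n0 form in which [finite_measure] is stated. *)
Definition tends_to {K : numFieldType} (u : nat -> K) (l : K) :=
  forall e : K, 0 < e -> exists n0, forall n, (n0 <= n)%N -> `|u n - l| < e.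

Lemma eq0_small {K : numFieldType} (x : K) : (forall e, 0 < e -> `|x| < e) -> x = 0.
Proof.
move=> small; apply/eqP; apply: contraT => x0.
by have := small `|x|; rewrite normr_gt0 x0 ltxx => /(_ isT).
Qed.

Lemma tends_to_cst_eq {K : numFieldType} (a l : K) :
  tends_to (fun=> a) l -> a = l.
Proof.
move=> cvg; apply/eqP; rewrite -subr_eq0; apply/eqP/eq0_small => e /cvg [n0].
exact.
Qed.

Lemma exists_invSn_lt {R : archiFieldType} (d : R) :
  0 < d -> exists n : nat, n.+1%:R^-1 < d.
Proof.
move=> d0; exists (Num.Def.truncn d^-1).
by rewrite invf_plt ?posrE ?ltr0n ?invr_gt0 // truncnS_gt.
Qed.

Definition extend0 {Y : Type} (M' : set (set Y)) {K : numFieldType}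
    (mu : Msub M' -> K) (A : set Y) : K :=
  if pselect (M' A) is left mA then mu (exist _ A mA) else 0.

Lemma extend0E {Y : Type} (M' : set (set Y)) {K : numFieldType}
    (mu : Msub M' -> K) A (mA : M' A) : extend0 mu A = mu (exist _ A mA).
Proof. by rewrite /extend0; case: pselect => // mA'; congr mu; apply: eq_exist. Qed.

Lemma sub_type_inj {Y : Type} (G : set Y) (u v : Defs.sub_type G) :
  proj1_sig u = proj1_sig v -> u = v.
Proof. by case: u => u pu; case: v => v pv /= uv; apply: eq_exist. Qed.

Lemma extend0_val {Y : Type} (M' : set (set Y)) {K : numFieldType}
    (mu : Msub M' -> K) (a : Msub M') : extend0 mu (proj1_sig a) = mu a.
Proof. by case: a => A mA; apply: extend0E. Qed.

Lemma image_val_preimage {Y : Type} (G A : set Y) :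
  (@proj1_sig Y G) @` ((@proj1_sig Y G) @^-1` A) = A `&` G.
Proof.
apply/seteqP; split=> [_ [[t Gt] At <-] //|t [At Gt]].
by exists (exist _ t Gt).
Qed.

(** * Hahn decomposition of a real sigma-additive set function *)

Section HahnDecomposition.
Variables (X : Type) (x0 : X) (M : set (set X)) (sigmaM : sigma_algebra setT M).

(* [Hahn_decomposition] needs a measurableType: equip an alias of X with M. *)
Definition sigma_algebra_carrier : Type := X.
Local Notation T := sigma_algebra_carrier.

HB.instance Definition _ := gen_eqMixin T.
HB.instance Definition _ := gen_choiceMixin T.
HB.instance Definition _ := isPointed.Build T x0.

Let Mset0 : M set0. Proof. by case: sigmaM. Qed.
Let MsetC A : M A -> M (~` A).
Proof. by case: sigmaM => _ MsetD _ /MsetD; rewrite setTD. Qed.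
Let Mbigcup (F : (set T)^nat) : (forall i, M (F i)) -> M (\bigcup_i F i).
Proof. by case: sigmaM => _ _; apply. Qed.

HB.instance Definition _ :=
  @isMeasurable.Build default_measure_display T M Mset0 MsetC Mbigcup.

Variables (R : realType) (f : set X -> R).
Hypothesis f0 : f set0 = 0.
Hypothesis f_sigma_additive : forall F : nat -> set X, (forall i, M (F i)) ->
  (forall i j, i != j -> F i `&` F j = set0) ->
  tends_to (fun n => \sum_(i < n) f (F i)) (f (\bigcup_n F n)).

Let charge_of_f : set T -> \bar R := fun A => (f A)%:E.

Let charge_of_f0 : charge_of_f set0 = 0%E. Proof. by rewrite /charge_of_f f0. Qed.

Let charge_of_f_fin A : measurable A -> charge_of_f A \is a fin_num. Proof. by []. Qed.

Let charge_of_f_sigma_additive : semi_sigma_additive charge_of_f.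
Proof.
move=> F mF tF mUF; rewrite /charge_of_f.
under eq_fun do rewrite sumEFin.
apply: cvg_EFin; first by near=> n.
apply/cvgrPdist_lt => e e0 /=.
have disjF i j : i != j -> F i `&` F j = set0.
  move=> ij; apply/eqP/negPn/negP => /set0P FiFj.
  by move: ij; rewrite (tF i j) // eqxx.
have [n0 Hn0] := f_sigma_additive mF disjF e0.
exists n0 => // n /= n0n; rewrite distrC big_mkord; exact: Hn0.
Unshelve. all: by end_near.
Qed.

HB.instance Definition _ := isCharge.Build _ T R charge_of_f
  charge_of_f0 charge_of_f_fin charge_of_f_sigma_additive.

Lemma Hahn_decomposition_sigma_additive : exists2 P, M P &
  (forall c, M c -> c `<=` P -> 0 <= f c) /\
  (forall c, M c -> c `<=` ~` P -> f c <= 0).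
Proof.
have [P [Q [[mP posP] [mQ negQ] PQ _]]] := Hahn_decomposition charge_of_f.
exists P => //; split=> c mc cP.
  by have := posP c mc cP; rewrite lee_fin.
rewrite -lee_fin; apply: negQ mc _ => x /cP Px.
have : (P `|` Q) x by rewrite PQ.
by case.
Qed.

End HahnDecomposition.

Section ComplexNorm.
Variable R : realType.

Lemma normc_ge_Im (z : R[i]) : `|complex.Im z|%:C <= `|z|.
Proof.
by rewrite normc_def lecR addrC -sqrtr_sqr ler_sqrt ?addr_ge0 ?sqr_ge0 // lerDl sqr_ge0.
Qed.

Lemma normc_le_ReIm (z : R[i]) : `|z| <= (`|complex.Re z| + `|complex.Im z|)%:C.
Proof.
rewrite normc_def lecR.
set a := complex.Re z; set b := complex.Im z.
rewrite -(@ger0_norm _ (`|a| + `|b|)) ?addr_ge0 // -sqrtr_sqr ler_sqrt ?sqr_ge0 //.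
rewrite -(real_normK (num_real a)) -(real_normK (num_real b)).
have ha : 0 <= `|a| by []. have hb : 0 <= `|b| by [].
nra.
Qed.

Lemma normc_real (x : R) : `|x%:C| = `|x|%:C.
Proof. by rewrite normc_def /= expr0n /= addr0 sqrtr_sqr. Qed.

Lemma gtc0_real (e : R[i]) : 0 < e -> e = (complex.Re e)%:C /\ 0 < complex.Re e.
Proof. by case: e => a b; rewrite ltcE /= => /andP[/eqP -> ->]. Qed.

Lemma tends_to_Re (u : nat -> R[i]) l :
  tends_to u l -> tends_to (fun n => complex.Re (u n)) (complex.Re l).
Proof.
move=> ul e e0; have [n0 cvg] := ul e%:C (eqbRL (ltcR _ _) e0).
by exists n0 => n /cvg; rewrite -raddfB -ltcR; apply: le_lt_trans (normc_ge_Re _).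
Qed.

Lemma tends_to_Im (u : nat -> R[i]) l :
  tends_to u l -> tends_to (fun n => complex.Im (u n)) (complex.Im l).
Proof.
move=> ul e e0; have [n0 cvg] := ul e%:C (eqbRL (ltcR _ _) e0).
by exists n0 => n /cvg; rewrite -raddfB -ltcR; apply: le_lt_trans (normc_ge_Im _).
Qed.

End ComplexNorm.

(** * The measure algebra M/N *)

Section EnhancedSpace.
Variables (X : Type) (M N : set (set X)).
Hypothesis enhancedMN : enhanced M N.
Local Notation L := (MN M N).
Local Notation le := (@mnle X M N).
Implicit Types (A B C D : set X) (x y z : L).

Lemma sigmaM : sigma_algebra setT M. Proof. by case: enhancedMN. Qed.
Lemma Mset0 : M set0. Proof. by case: sigmaM. Qed.
Lemma MsetC A : M A -> M (~` A).
Proof. by case: sigmaM => _ MsetD _ /MsetD; rewrite setTD. Qed.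
Lemma Mbigcup (F : nat -> set X) : (forall i, M (F i)) -> M (\bigcup_i F i).
Proof. by case: sigmaM => _ _; apply. Qed.
Lemma MsetT : M setT. Proof. by rewrite -setC0; apply/MsetC/Mset0. Qed.
Lemma MsetU A B : M A -> M B -> M (A `|` B).
Proof.
by move=> mA mB; rewrite -bigcup2E; apply: Mbigcup => -[//|[//|i]]; apply: Mset0.
Qed.
Lemma MsetI A B : M A -> M B -> M (A `&` B).
Proof.
move=> mA mB; have -> : A `&` B = ~` (~` A `|` ~` B) by set_eq_tauto.
by apply/MsetC/MsetU; apply: MsetC.
Qed.
Lemma MsetD A B : M A -> M B -> M (A `\` B).
Proof. by move=> mA mB; rewrite setDE; apply/MsetI/MsetC. Qed.
Lemma Mbig_setU (F : nat -> set X) n :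
  (forall i, M (F i)) -> M (\big[setU/set0]_(i < n) F i).
Proof.
move=> mF; elim: n => [|n IHn]; first by rewrite big_ord0; apply: Mset0.
by rewrite big_ord_recr; apply: MsetU.
Qed.

Lemma N_M A : N A -> M A. Proof. by case: enhancedMN => _ + _ _ _; apply. Qed.
Lemma Nsub A B : N B -> A `<=` B -> N A.
Proof. by case: enhancedMN => _ _ + _ _; apply. Qed.
Lemma Nset0 : N set0. Proof. by case: enhancedMN. Qed.
Lemma Nbigcup (F : nat -> set X) : (forall i, N (F i)) -> N (\bigcup_i F i).
Proof. by case: enhancedMN => _ _ _ _; apply. Qed.
Lemma NsetU A B : N A -> N B -> N (A `|` B).
Proof.
by move=> nA nB; rewrite -bigcup2E; apply: Nbigcup => -[//|[//|i]]; apply: Nset0.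
Qed.
Lemma Nsub_setU A B C : N B -> N C -> A `<=` B `|` C -> N A.
Proof. by move=> nB nC; apply/Nsub/NsetU. Qed.
Lemma Nsub_setU3 A B C D : N B -> N C -> N D -> A `<=` B `|` C `|` D -> N A.
Proof. by move=> nB nC nD; apply/Nsub/NsetU => //; apply: NsetU. Qed.
Lemma Nsub0 A : A `<=` set0 -> N A.
Proof. exact: Nsub Nset0. Qed.

Definition rep x : set X := projT1 (cid (proj2_sig x)).

Lemma rep_M x : M (rep x).
Proof. by rewrite /rep; case: cid => m /= []. Qed.

Lemma rep_cls x : proj1_sig x = cls M N (rep x).
Proof. by rewrite /rep; case: cid => m /= []. Qed.

(* The class of A, with a junk value outside M. *)
Definition cl A : L :=
  match pselect (M A) with
  | left mA => qmap M N (exist _ A mA)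
  | right _ => qmap M N (exist _ set0 Mset0)
  end.

Lemma MN_eq x y : proj1_sig x = proj1_sig y -> x = y.
Proof. by case: x => x px; case: y => y py /= xy; apply: eq_exist. Qed.

Lemma qmap_cl (a : Msub M) : qmap M N a = cl (proj1_sig a).
Proof.
rewrite /cl; case: pselect => [ma|]; last by case: a.
exact: MN_eq.
Qed.

Lemma cl_val A : M A -> proj1_sig (cl A) = cls M N A.
Proof. by move=> mA; rewrite /cl; case: pselect. Qed.

Lemma cls_self A : M A -> cls M N A A.
Proof. by move=> mA; split => //; apply: Nsub0; set_tauto. Qed.

Lemma cl_rep x : cl (rep x) = x.
Proof. by apply: MN_eq; rewrite cl_val; [exact/esym/rep_cls|exact: rep_M]. Qed.

Lemma comp_qmap_inj {T : Type} (f g : L -> T) : f \o qmap M N = g \o qmap M N -> f = g.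
Proof.
move=> fg; apply: funext => x; rewrite -(cl_rep x).
by have := congr1 (fun h => h (exist _ (rep x) (rep_M x))) fg; rewrite /= qmap_cl.
Qed.

Lemma cl_eqP A B : M A -> M B -> cl A = cl B <-> N (symdiff A B).
Proof.
move=> mA mB; split => [ABeq|nAB].
  have : proj1_sig (cl B) A by rewrite -ABeq cl_val //; exact: cls_self.
  by rewrite cl_val // => -[_ nBA]; apply: Nsub nBA _; set_tauto.
apply: MN_eq; rewrite !cl_val //; apply/seteqP; split => m [mm nm]; split => //.
  by apply: Nsub_setU nAB nm _; set_tauto.
by apply: Nsub_setU nAB nm _; set_tauto.
Qed.

Lemma symdiff_rep_cl A : M A -> N (symdiff A (rep (cl A))).
Proof. by move=> mA; apply/cl_eqP; rewrite ?cl_rep //; apply: rep_M. Qed.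

Lemma mnleP x y : le x y <-> N (rep x `\` rep y).
Proof.
split.
  case=> ma [mb [xma [ymb nab]]].
  move: xma ymb; rewrite !rep_cls => -[_ nxa] [_ nyb].
  by apply: Nsub_setU3 nxa nab nyb _; set_tauto.
move=> nxy; exists (rep x), (rep y).
by rewrite !rep_cls; split; [|split] => //; apply: cls_self; apply: rep_M.
Qed.

Lemma le_clP A B : M A -> M B -> le (cl A) (cl B) <-> N (A `\` B).
Proof.
move=> mA mB; rewrite mnleP.
have nA := symdiff_rep_cl mA; have nB := symdiff_rep_cl mB.
by split => nAB; apply: Nsub_setU3 nA nAB nB _; set_tauto.
Qed.

Lemma le_cl_repP A y : M A -> le (cl A) y <-> N (A `\` rep y).
Proof. by move=> mA; rewrite -{1}(cl_rep y); apply: le_clP => //; apply: rep_M. Qed.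

Lemma le_rep_clP x B : M B -> le x (cl B) <-> N (rep x `\` B).
Proof. by move=> mB; rewrite -{1}(cl_rep x); apply: le_clP => //; apply: rep_M. Qed.

Lemma le_cl_sub A B : M A -> M B -> A `<=` B -> le (cl A) (cl B).
Proof. by move=> mA mB AB; apply/le_clP => //; apply: Nsub0 => t [/AB]. Qed.

Lemma mnle_refl x : le x x.
Proof. by apply/mnleP/Nsub0; set_tauto. Qed.

Lemma mnle_trans x y z : le x y -> le y z -> le x z.
Proof.
move=> /mnleP nxy /mnleP nyz; apply/mnleP.
by apply: Nsub_setU nxy nyz _; set_tauto.
Qed.

Lemma mnle_anti x y : le x y -> le y x -> x = y.
Proof.
move=> /mnleP nxy /mnleP nyx; rewrite -(cl_rep x) -(cl_rep y).
by apply/cl_eqP; [apply: rep_M|apply: rep_M|apply: NsetU].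
Qed.

Lemma is_lub_cl A B : M A -> M B -> is_lub (cl A) (cl B) (cl (A `|` B)).
Proof.
move=> mA mB; have mAB := MsetU mA mB.
split; [exact: le_cl_sub|exact: le_cl_sub|].
move=> z /(le_cl_repP _ mA) nA /(le_cl_repP _ mB) nB; apply/le_cl_repP => //.
by apply: Nsub_setU nA nB _; set_tauto.
Qed.

Lemma is_glb_cl A B : M A -> M B -> is_glb (cl A) (cl B) (cl (A `&` B)).
Proof.
move=> mA mB; have mAB := MsetI mA mB.
split; [exact: le_cl_sub|exact: le_cl_sub|].
move=> z /(le_rep_clP _ mA) nA /(le_rep_clP _ mB) nB; apply/le_rep_clP => //.
by apply: Nsub_setU nA nB _; set_tauto.
Qed.

Lemma is_lub_rep x y j : is_lub x y j -> j = cl (rep x `|` rep y).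
Proof.
move=> [xj yj jmin]; have mx := rep_M x; have my := rep_M y.
have [xU yU Umin] := is_lub_cl mx my; rewrite !cl_rep in xU yU Umin.
by apply: mnle_anti; [apply: jmin|apply: Umin].
Qed.

Lemma is_glb_rep x y m : is_glb x y m -> m = cl (rep x `&` rep y).
Proof.
move=> [mx my mmax]; have rx := rep_M x; have ry := rep_M y.
have [Ix Iy Imax] := is_glb_cl rx ry; rewrite !cl_rep in Ix Iy Imax.
by apply: mnle_anti; [apply: Imax|apply: mmax].
Qed.

Lemma is_bot_cl A : M A -> N A -> is_bot (cl A).
Proof. by move=> mA nA x; apply/le_cl_repP => //; apply: Nsub nA _; set_tauto. Qed.

Lemma is_bot_cl0 : is_bot (cl set0).
Proof. exact: is_bot_cl Mset0 Nset0. Qed.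

Lemma is_bot_rep z : is_bot z -> N (rep z).
Proof.
move=> /(_ (cl set0)) /(le_rep_clP _ Mset0) nz.
by apply: Nsub nz _; set_tauto.
Qed.

Lemma is_top_clT : is_top (cl setT).
Proof. by move=> x; apply/le_rep_clP; [apply: MsetT|apply: Nsub0; set_tauto]. Qed.

(** * Finite measures as set functions, and control measures *)

Definition finite_measure_fun {K : numFieldType} (m : set X -> K) :=
  (forall A, N A -> m A = 0) /\
  forall F : nat -> set X, (forall i, M (F i)) ->
    (forall i j, i != j -> F i `&` F j = set0) ->
    tends_to (fun n => \sum_(i < n) m (F i)) (m (\bigcup_n F n)).

Lemma finite_measure_extend0 {K : numFieldType} (mu : Msub M -> K) :
  finite_measure M N mu -> finite_measure_fun (extend0 mu).
Proof.
case=> mu_null mu_sigma; split=> [A nA|F mF disjF e e0].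
  by rewrite (extend0E _ (N_M nA)); apply: mu_null.
have mU := Mbigcup mF.
have [n0 cvg] := mu_sigma (fun i => exist _ (F i) (mF i)) (exist _ _ mU) disjF erefl e e0.
exists n0 => n n0n; rewrite (extend0E _ mU).
under eq_bigr do rewrite (extend0E _ (mF _)).
exact: cvg.
Qed.

Section FiniteMeasureFun.
Context {K : numFieldType} (m : set X -> K) (hm : finite_measure_fun m).

Lemma fm_null A : N A -> m A = 0. Proof. by case: hm => + _; apply. Qed.

Lemma fm_setU A B : M A -> M B -> A `&` B = set0 -> m (A `|` B) = m A + m B.
Proof.
move=> mA mB AB; pose F := bigcup2 A B.
have mF i : M (F i) by case: i => [|[|i]] //=; apply: Mset0.
have disjF i j : i != j -> F i `&` F j = set0.
  by case: i j => [|[|i]] [|[|j]] //= _; rewrite ?set0I ?setI0 // setIC.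
have sumF n : \sum_(i < n.+2) m (F i) = m A + m B.
  elim: n => [|n IHn]; first by rewrite !big_ord_recl big_ord0 /= addr0.
  by rewrite big_ord_recr IHn /= (fm_null Nset0) addr0.
apply/eqP; rewrite eq_sym -subr_eq0 -bigcup2E; apply/eqP/eq0_small => e e0.
have [n0 cvg] := (proj2 hm) F mF disjF e e0.
by rewrite -(sumF n0); apply: cvg; apply/leqW/leqW.
Qed.

Lemma fm_setID A B : M A -> M B -> m A = m (A `&` B) + m (A `\` B).
Proof.
move=> mA mB; rewrite -fm_setU; [|exact: MsetI|exact: MsetD|set_eq_tauto].
by congr m; set_eq_tauto.
Qed.

Lemma fm_symdiff A B : M A -> M B -> N (symdiff A B) -> m A = m B.
Proof.
move=> mA mB nAB; rewrite (fm_setID mA mB) (fm_setID mB mA) setIC.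
have nAdB : N (A `\` B) by apply: Nsub nAB _; set_tauto.
have nBdA : N (B `\` A) by apply: Nsub nAB _; set_tauto.
by rewrite (fm_null nAdB) (fm_null nBdA).
Qed.

Lemma fm_big_setU (F : nat -> set X) n : (forall i, M (F i)) ->
  (forall i j, i != j -> F i `&` F j = set0) ->
  m (\big[setU/set0]_(i < n) F i) = \sum_(i < n) m (F i).
Proof.
move=> mF disjF; elim: n => [|n IHn].
  by rewrite !big_ord0 (fm_null Nset0).
rewrite !big_ord_recr /= fm_setU ?IHn //; first exact: Mbig_setU.
rewrite -bigcup_mkord; apply/seteqP; split => // t [[i /= ilt Fit] Fnt].
have : (F i `&` F n) t by [].
by rewrite disjF // neq_ltn ilt.
Qed.

Lemma fm_nondecreasing_cvg (y : nat -> set X) : (forall n, M (y n)) ->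
  (forall n, y n `<=` y n.+1) -> tends_to (fun n => m (y n)) (m (\bigcup_n y n)).
Proof.
move=> my yS e e0.
have ndy : nondecreasing_seq y by apply/nondecreasing_seqP => n; apply/subsetPset.
have mD i : M (seqD y i) by case: i => [|i] /=; [|apply: MsetD].
have disjD i j : i != j -> seqD y i `&` seqD y j = set0.
  by move=> ij; apply: (trivIsetP.1 (trivIset_seqD ndy)).
have [n0 cvg] := (proj2 hm) _ mD disjD e e0.
exists n0 => n n0n; rewrite -eq_bigcup_seqD -(nondecreasing_bigsetU_seqD n ndy).
by rewrite fm_big_setU //; apply/cvg/leqW.
Qed.

End FiniteMeasureFun.

Variable R : realType.

Lemma fm_Re (m : set X -> R[i]) :
  finite_measure_fun m -> finite_measure_fun (fun A => complex.Re (m A)).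
Proof.
move=> hm; split=> [A nA|F mF disjF e e0]; first by rewrite (fm_null hm nA).
have [n0 cvg] := tends_to_Re ((proj2 hm) F mF disjF) e0.
by exists n0 => n /cvg; rewrite raddf_sum.
Qed.

Lemma fm_Im (m : set X -> R[i]) :
  finite_measure_fun m -> finite_measure_fun (fun A => complex.Im (m A)).
Proof.
move=> hm; split=> [A nA|F mF disjF e e0]; first by rewrite (fm_null hm nA).
have [n0 cvg] := tends_to_Im ((proj2 hm) F mF disjF) e0.
by exists n0 => n /cvg; rewrite raddf_sum.
Qed.

Lemma fm_Hahn_decomposition (f : set X -> R) : finite_measure_fun f ->
  exists2 P, M P &
    (forall c, M c -> c `<=` P -> 0 <= f c) /\ (forall c, M c -> c `<=` ~` P -> f c <= 0).
Proof.
(* Measurable types are pointed, hence the case split on the emptiness of X. *)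
move=> hf; have [[x0 _]|noX] := pselect (exists x : X, True).
  exact: (Hahn_decomposition_sigma_additive x0 sigmaM (fm_null hf Nset0) (proj2 hf)).
have c0 (c : set X) : c = set0 by apply/seteqP; split => // t _; apply: noX; exists t.
exists set0; first exact: Mset0.
by split=> c _ _; rewrite (c0 c) (fm_null hf Nset0).
Qed.

Section TotalVariation.
Variables (f : set X -> R) (P : set X).
Hypotheses (hf : finite_measure_fun f) (mP : M P).
Hypothesis f_ge0_in : forall c, M c -> c `<=` P -> 0 <= f c.
Hypothesis f_le0_out : forall c, M c -> c `<=` ~` P -> f c <= 0.

(* With P a Hahn set for f, this is the total variation |f|. *)
Definition variation A := f (A `&` P) - f (A `\` P).

Lemma variation_ge0 A : M A -> 0 <= variation A.
Proof.
move=> mA; have fIP := f_ge0_in (MsetI mA mP) (@subIsetr _ _ _).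
have fDP : f (A `\` P) <= 0 by apply: f_le0_out; [apply: MsetD|move=> t []].
rewrite /variation; lra.
Qed.

Lemma variation_setU A B : M A -> M B -> A `&` B = set0 ->
  variation (A `|` B) = variation A + variation B.
Proof.
move=> mA mB AB; rewrite /variation.
rewrite (_ : (A `|` B) `&` P = (A `&` P) `|` (B `&` P)); last by set_eq_tauto.
rewrite (_ : (A `|` B) `\` P = (A `\` P) `|` (B `\` P)); last by set_eq_tauto.
rewrite (fm_setU hf (MsetI mA mP) (MsetI mB mP)); last first.
  by apply/seteqP; split => // t [[At _] [Bt _]]; rewrite -AB.
rewrite (fm_setU hf (MsetD mA mP) (MsetD mB mP)); last first.
  by apply/seteqP; split => // t [[At _] [Bt _]]; rewrite -AB.
ring.
Qed.

Lemma variation_le A B : M A -> M B -> A `<=` B -> variation A <= variation B.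
Proof.
move=> mA mB AB; rewrite (_ : B = A `|` (B `\` A)); last first.
  apply/seteqP; split=> [t Bt|t [/AB //|[] //]].
  by have [At|nAt] := pselect (A t); [left|right].
have mBA := MsetD mB mA.
have disj : A `&` (B `\` A) = set0 by set_eq_tauto.
by rewrite variation_setU // lerDl variation_ge0.
Qed.

Lemma normr_le_variation c : M c -> `|f c| <= variation c.
Proof.
move=> mc; rewrite (fm_setID hf mc mP) /variation.
have fIP := f_ge0_in (MsetI mc mP) (@subIsetr _ _ _).
have fDP : f (c `\` P) <= 0 by apply: f_le0_out; [apply: MsetD|move=> t []].
rewrite ler_norml; apply/andP; split; lra.
Qed.

Lemma variation_eq0 A : M A -> (forall c, M c -> c `<=` A -> f c = 0) ->
  variation A = 0.
Proof.
move=> mA fA0; rewrite /variation !fA0 ?subr0 //; try by move=> t [].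
  exact: MsetD.
exact: MsetI.
Qed.

Lemma variation_symdiff A B : M A -> M B -> N (symdiff A B) ->
  variation A = variation B.
Proof.
move=> mA mB nAB; rewrite /variation.
rewrite (fm_symdiff hf (MsetI mA mP) (MsetI mB mP)); last by apply: Nsub nAB _; set_tauto.
by rewrite (fm_symdiff hf (MsetD mA mP) (MsetD mB mP)) //; apply: Nsub nAB _; set_tauto.
Qed.

Lemma variation_nondecreasing_cvg (y : nat -> set X) : (forall n, M (y n)) ->
  (forall n, y n `<=` y n.+1) ->
  tends_to (fun n => variation (y n)) (variation (\bigcup_n y n)).
Proof.
move=> my yS e e0; have e2 : 0 < e / 2 by rewrite divr_gt0.
have [n1 cvgI] := fm_nondecreasing_cvg hf (fun n => MsetI (my n) mP)
  (fun n t yPt => conj (yS n t yPt.1) yPt.2) e2.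
have [n2 cvgD] := fm_nondecreasing_cvg hf (fun n => MsetD (my n) mP)
  (fun n t yPt => conj (yS n t yPt.1) yPt.2) e2.
exists (maxn n1 n2) => n; rewrite geq_max => /andP[n1n n2n].
move: (cvgI n n1n) (cvgD n n2n); rewrite -setI_bigcupl -setD_bigcupl /variation.
rewrite !ltr_norml => /andP[? ?] /andP[? ?]; apply/andP; split; lra.
Qed.

End TotalVariation.

Record control_measure (m : set X -> R[i]) (rho : set X -> R) : Prop := ControlMeasure {
  control_ge0 : forall A, M A -> 0 <= rho A;
  control_setU : forall A B, M A -> M B -> A `&` B = set0 ->
    rho (A `|` B) = rho A + rho B;
  control_symdiff : forall A B, M A -> M B -> N (symdiff A B) -> rho A = rho B;
  control_dominates : forall c A, M c -> M A -> c `<=` A -> `|m c| <= (rho A)%:C;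
  control_eq0 : forall A, M A -> (forall c, M c -> c `<=` A -> m c = 0) -> rho A = 0;
  control_nondecreasing_cvg : forall y : nat -> set X, (forall n, M (y n)) ->
    (forall n, y n `<=` y n.+1) -> tends_to (fun n => rho (y n)) (rho (\bigcup_n y n))
}.

(* The sum of the total variations of Re m and Im m. *)
Lemma control_measure_exists (m : set X -> R[i]) :
  finite_measure_fun m -> exists rho, control_measure m rho.
Proof.
move=> hm; have hRe := fm_Re hm; have hIm := fm_Im hm.
have [P1 mP1 [Re_ge0 Re_le0]] := fm_Hahn_decomposition hRe.
have [P2 mP2 [Im_ge0 Im_le0]] := fm_Hahn_decomposition hIm.
pose v1 := variation (fun A => complex.Re (m A)) P1.
pose v2 := variation (fun A => complex.Im (m A)) P2.
exists (fun A => v1 A + v2 A); split.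
- by move=> A mA; rewrite addr_ge0 // variation_ge0.
- by move=> A B mA mB AB; rewrite /v1 /v2 !variation_setU //; ring.
- move=> A B mA mB nAB.
  rewrite /v1 /v2 (variation_symdiff hRe mP1 mA mB nAB).
  by rewrite (variation_symdiff hIm mP2 mA mB nAB).
- move=> c A mc mA cA; apply: le_trans (normc_le_ReIm _) _; rewrite lecR.
  apply: lerD.
    apply: le_trans (normr_le_variation hRe mP1 Re_ge0 Re_le0 mc) _.
    exact: variation_le.
  apply: le_trans (normr_le_variation hIm mP2 Im_ge0 Im_le0 mc) _.
  exact: variation_le.
- move=> A mA m0.
  by rewrite /v1 /v2 !variation_eq0 ?addr0 // => c mc cA; rewrite m0.
move=> y my yS e e0; have e2 : 0 < e / 2 by rewrite divr_gt0.
have [n1 cvg1] := variation_nondecreasing_cvg hRe mP1 my yS e2.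
have [n2 cvg2] := variation_nondecreasing_cvg hIm mP2 my yS e2.
exists (maxn n1 n2) => n; rewrite geq_max => /andP[n1n n2n].
move: (cvg1 n n1n) (cvg2 n n2n); rewrite /v1 /v2.
rewrite !ltr_norml => /andP[? ?] /andP[? ?]; apply/andP; split; lra.
Qed.

(** * Exhaustion along directed families *)

Lemma directed_chain (I : set L) (xs : nat -> L) : directed I ->
  (forall n, I (xs n)) ->
  exists w : nat -> set X, [/\ forall n, M (w n), forall n, I (cl (w n)),
    forall n, w n `<=` w n.+1 & forall n, N (rep (xs n) `\` w n)].
Proof.
move=> [_ dirI] Ixs.
have : forall p : L * L, exists z, I p.1 -> I p.2 -> [/\ I z, le p.1 z & le p.2 z].
  move=> p; have [[Ip1 Ip2]|nIp] := pselect (I p.1 /\ I p.2).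
    by have [z Iz] := dirI _ _ Ip1 Ip2; exists z.
  by exists p.1 => Ip1 Ip2; exfalso; apply: nIp.
move=> /choice[ub ubP].
pose w := fix w n :=
  if n is k.+1 then w k `|` rep (ub (cl (w k), xs k.+1)) else rep (xs 0).
have wP n : [/\ M (w n), I (cl (w n)) & N (rep (xs n) `\` w n)].
  elim: n => [|k [mwk Iwk nwk]] /=.
    by rewrite cl_rep; split; [apply: rep_M|apply: Ixs|apply: Nsub0; set_tauto].
  have [Iu wk_le_u xs_le_u] := ubP (cl (w k), xs k.+1) Iwk (Ixs k.+1).
  set u := ub _ in Iu wk_le_u xs_le_u *; have mu := rep_M u.
  have nwu : N (w k `\` rep u) by apply/le_cl_repP.
  have nxu : N (rep (xs k.+1) `\` rep u) by apply/mnleP.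
  split; [exact: MsetU| |by apply: Nsub nxu _; set_tauto].
  rewrite (_ : cl _ = u) // -{2}(cl_rep u); apply/cl_eqP; [exact: MsetU|exact: mu|].
  by apply: Nsub nwu _; set_tauto.
exists w; split=> n; try by case: (wP n).
by move=> t wnt; left.
Qed.

Section Exhaustion.
Variable rho : set X -> R.
Hypothesis rho_ge0 : forall A, M A -> 0 <= rho A.
Hypothesis rho_setU : forall A B, M A -> M B -> A `&` B = set0 ->
  rho (A `|` B) = rho A + rho B.
Hypothesis rho_symdiff : forall A B, M A -> M B -> N (symdiff A B) -> rho A = rho B.

Lemma rho_setDU A B : M A -> M B -> rho (A `|` B) = rho A + rho (B `\` A).
Proof.
move=> mA mB; rewrite -rho_setU; [|by []|exact: MsetD|set_eq_tauto].
by congr rho; set_eq_tauto.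
Qed.

Lemma rho_le A B : M A -> M B -> A `<=` B -> rho A <= rho B.
Proof.
move=> mA mB AB; rewrite -(setUidr AB) rho_setDU //.
by rewrite lerDl rho_ge0 //; apply: MsetD.
Qed.

Lemma rho_setD A B : M A -> M B -> B `<=` A -> rho (A `\` B) = rho A - rho B.
Proof.
by move=> mA mB BA; rewrite -{2}(setUidr BA) rho_setDU // addrC addKr.
Qed.

Lemma rho_setU_le A B : M A -> M B -> rho (A `|` B) <= rho A + rho B.
Proof.
move=> mA mB; rewrite rho_setDU // lerD2l.
by apply: rho_le (MsetD mB mA) mB _ => t [].
Qed.

(* Choose members of I on which rho (g `&` _) approaches its supremum and chain
   them; the remainder of g then carries no rho-mass inside any member of I. *)
Lemma directed_exhaustion (I : set L) g : directed I -> M g ->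
  exists w : nat -> set X, [/\ forall n, M (w n), forall n, I (cl (w n)),
    forall n, w n `<=` w n.+1 &
    forall x, I x -> rho ((g `\` \bigcup_n w n) `&` rep x) = 0].
Proof.
move=> dirI mg; have [[x0 Ix0] _] := dirI.
pose S := [set rho (g `&` rep x) | x in I].
have supS : has_sup S.
  split; first by exists (rho (g `&` rep x0)), x0.
  exists (rho setT) => _ [x Ix <-].
  by apply: rho_le; [apply/MsetI/rep_M|apply: MsetT|].
have : forall n : nat, exists x, I x /\ sup S - n.+1%:R^-1 < rho (g `&` rep x).
  move=> n; have e0 : 0 < n.+1%:R^-1 :> R by rewrite invr_gt0 ltr0Sn.
  by have [_ [x Ix <-] ?] := sup_adherent e0 supS; exists x.
move=> /choice[xs xsP].
have [w [mw Iw wS nxsw]] := directed_chain dirI (fun n => (xsP n).1).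
exists w; split => // x Ix.
set W := \bigcup_n w n; have mW : M W := Mbigcup mw.
have mR : M ((g `\` W) `&` rep x) by apply: MsetI; [apply: MsetD|apply: rep_M].
apply/eqP; rewrite eq_le rho_ge0 // andbT leNgt; apply/negP => d0.
have [n lt_d] := exists_invSn_lt d0.
have [_ dirI2] := dirI; have [z [Iz wn_le_z x_le_z]] := dirI2 _ _ (Iw n) Ix.
have mxn := rep_M (xs n); have mz := rep_M z.
pose A := g `&` rep (xs n) `&` w n.
have mA : M A by apply: MsetI => //; apply: MsetI.
have rhoA : rho A = rho (g `&` rep (xs n)).
  apply: rho_symdiff => //; first exact: MsetI.
  by apply: Nsub (nxsw n) _; rewrite /A; set_tauto.
have disjA : A `&` ((g `\` W) `&` rep x) = set0.
  by apply/seteqP; split => // t [[_ wnt] [[_ nWt] _]]; apply: nWt; exists n.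
have nwz : N (w n `\` rep z) by apply/le_cl_repP.
have nxz : N (rep x `\` rep z) by apply/mnleP.
have rho_inside_z : rho (A `|` (g `\` W) `&` rep x) <= rho (g `&` rep z).
  rewrite (rho_symdiff (B := (A `|` (g `\` W) `&` rep x) `&` rep z)).
  - by apply: rho_le; [apply/MsetI/mz/MsetU|apply: MsetI|move=> t; rewrite /A /=; tauto].
  - exact: MsetU.
  - by apply/MsetI/mz/MsetU.
  by apply: Nsub_setU nwz nxz _ => t; rewrite /symdiff /A /=; tauto.
have : rho (g `&` rep z) <= sup S by apply: sup_upper_bound => //; exists z.
move: rho_inside_z (xsP n).2 lt_d; rewrite rho_setU // rhoA.
move: (n.+1%:R^-1) => i; lra.
Qed.

End Exhaustion.

(** * Continuous valuations give essential finite measures *)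

Section ValuationSigmaAdditive.
Context {K : numFieldType} (D : set L) (g : L -> K).
Hypothesis D_down : forall x y, D y -> le x y -> D x.
Hypothesis g_valuation : valuation_on D g.
Hypothesis g_continuous : continuous_on D g.
Variables (F : nat -> set X).
Hypothesis mF : forall i, M (F i).
Hypothesis disjF : forall i j, i != j -> F i `&` F j = set0.

Local Notation B n := (\big[setU/set0]_(i < n) F i).

Lemma valuation_big_setU n : D (cl (B n)) -> g (cl (B n)) = \sum_(i < n) g (cl (F i)).
Proof.
case: g_valuation => g0 gD; elim: n => [|n IHn] DBn.
  by rewrite !big_ord0 g0 //; exact: is_bot_cl0.
have mBn := Mbig_setU n mF.
move: DBn; rewrite big_ord_recr /= => DBnFn.
have DBn : D (cl (B n)) by apply: D_down DBnFn _; apply: le_cl_sub; [|apply: MsetU|].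
have DFn : D (cl (F n)) by apply: D_down DBnFn _; apply: le_cl_sub; [|apply: MsetU|].
have gBF := gD _ _ _ _ DBn DFn (is_lub_cl mBn (mF n)) (is_glb_cl mBn (mF n)).
have BF0 : B n `&` F n = set0.
  rewrite -bigcup_mkord; apply/seteqP; split => // t [[i /= ilt Fit] Fnt].
  have : (F i `&` F n) t by [].
  by rewrite disjF // neq_ltn ilt.
by rewrite big_ord_recr /= -IHn // gBF BF0 (g0 _ is_bot_cl0) addr0.
Qed.

Lemma is_sup_big_setU : is_sup (range (fun n => cl (B n))) (cl (\bigcup_n F n)).
Proof.
have mU := Mbigcup mF; split.
  by move=> _ [n _ <-]; apply: le_cl_sub => //; [apply: Mbig_setU|apply: bigsetU_bigcup].
move=> z zub; apply/(le_cl_repP _ mU).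
have nBz n : N (B n.+1 `\` rep z).
  by apply/(le_cl_repP _ (Mbig_setU _ mF)); apply: zub; exists n.+1.
apply: Nsub (Nbigcup nBz) _ => t [[n _ Fnt] nzt]; exists n => //; split => //.
by rewrite big_ord_recr; right.
Qed.

Lemma continuous_valuation_sigma_additive : D (cl (\bigcup_n F n)) ->
  tends_to (fun n => \sum_(i < n) g (cl (F i))) (g (cl (\bigcup_n F n))).
Proof.
move=> DU e e0; have mU := Mbigcup mF.
have [supB_ub _] := is_sup_big_setU.
have DB n : D (cl (B n)) by apply: D_down DU _; apply: supB_ub; exists n.
have le_B n m : (n <= m)%N -> le (cl (B n)) (cl (B m)).
  move=> nm; apply: le_cl_sub; [exact: Mbig_setU|exact: Mbig_setU|].
  exact: subset_bigsetU.
have dirB : directed (range (fun n => cl (B n))).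
  split; first by exists (cl (B 0)), 0.
  move=> _ _ [i _ <-] [j _ <-]; exists (cl (B (maxn i j))); split.
  - by exists (maxn i j).
  - by apply: le_B; rewrite leq_maxl.
  - by apply: le_B; rewrite leq_maxr.
have BD : range (fun n => cl (B n)) `<=` D by move=> _ [n _ <-].
have [_ [[k _ <-] cvg]] := g_continuous BD dirB is_sup_big_setU e0.
exists k => n kn; rewrite -valuation_big_setU //.
by apply: cvg; [exists n|apply: le_B].
Qed.

End ValuationSigmaAdditive.

Lemma continuous_valuation_finite_measure (nu : L -> R[i]) :
  continuous_valuation nu -> finite_measure M N (nu \o qmap M N).
Proof.
case=> [[nu0 nuD] nuc]; split=> [a na|A U disjA UA e e0] /=.
  by rewrite qmap_cl; apply/nu0/is_bot_cl => //; apply: proj2_sig.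
have [n0 cvg] := continuous_valuation_sigma_additive (fun _ _ _ _ => I)
  (conj nu0 nuD) nuc (fun i => proj2_sig (A i)) disjA I e0.
exists n0 => n n0n; rewrite /= qmap_cl UA.
under eq_bigr do rewrite qmap_cl.
exact: cvg.
Qed.

Lemma valuation_on_realC (D : set L) (f : L -> R) :
  valuation_on D f -> valuation_on D (fun x => (f x)%:C).
Proof.
case=> f0 fD; split=> [z /f0 -> //|x y j m Dx Dy xyj xym].
by rewrite -!rmorphD /= (fD _ _ _ _ Dx Dy xyj xym).
Qed.

Lemma continuous_on_realC (D : set L) (f : L -> R) :
  continuous_on D f -> continuous_on D (fun x => (f x)%:C).
Proof.
move=> fc I s ID dirI supI e /gtc0_real[-> e0].
have [x0 [Ix0 cvg]] := fc I s ID dirI supI _ e0.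
by exists x0; split => // x Ix x0x; rewrite -rmorphB normc_real ltcR; apply: cvg.
Qed.

Definition faithfully_valued (a : L) := exists f : L -> R,
  [/\ forall b, le b a -> 0 <= f b, valuation_on (downset a) f,
      continuous_on (downset a) f & forall b, le b a -> f b = 0 -> is_bot b].

Lemma faithfully_valued_sigma_finite y G : faithfully_valued y -> M G ->
  G `<=` rep y -> sigma_finite_set R M N G.
Proof.
move=> [f [_ fval fc ffaith]] mG Gy.
pose val : Defs.sub_type G -> X := @proj1_sig X G.
have down_y x x' : downset y x' -> le x x' -> downset y x.
  by move=> x'y xx'; apply: mnle_trans xx' x'y.
have val_le_y (B : set (Defs.sub_type G)) : M (val @` B) -> le (cl (val @` B)) y.
  move=> mB; apply/(le_cl_repP _ mB); apply: Nsub0 => _ [[[t Gt] _ <-] nyt].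
  exact/nyt/Gy.
exists (fun b : Msub (induced_M M G) => (f (cl (val @` proj1_sig b)))%:C).
split; last first.
  move=> b /(_ b (@subset_refl _ _)) /complexI /(ffaith _ (val_le_y _ (proj2_sig b))).
  move=> /is_bot_rep nb; apply: Nsub_setU nb (symdiff_rep_cl (proj2_sig b)) _.
  by set_tauto.
split=> [b nb|a u disja ua e e0] /=.
  by have [f0 _] := fval; rewrite f0 //; apply: is_bot_cl => //; apply: N_M.
have disj_vala i j : i != j -> val @` proj1_sig (a i) `&` val @` proj1_sig (a j) = set0.
  move=> ij; apply/seteqP; split => // _ [[s ais <-] [t ajt /sub_type_inj ts]].
  subst t; have : (proj1_sig (a i) `&` proj1_sig (a j)) s by [].
  by rewrite disja.
have mU : M (val @` proj1_sig u) := proj2_sig u.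
have u_bigcup : \bigcup_n val @` proj1_sig (a n) = val @` proj1_sig u.
  by rewrite ua image_bigcup.
have := continuous_valuation_sigma_additive down_y (valuation_on_realC fval)
  (continuous_on_realC fc) (fun i => proj2_sig (a i)) disj_vala.
by rewrite u_bigcup; apply; [apply: val_le_y|].
Qed.

Section LocalVanishing.
Variables (nu : L -> R[i]) (S : set L) (A : set X).
Hypotheses (nu_cvaluation : continuous_valuation nu) (supS : is_sup S (cl setT)).
Hypothesis mA : M A.
Hypothesis nu_vanish : forall y c, S y -> M c -> c `<=` A `&` rep y -> nu (cl c) = 0.

Let null_below c := forall d, M d -> d `<=` c -> nu (cl d) = 0.

Let null_below_setU c1 c2 : M c1 -> M c2 -> null_below c1 -> null_below c2 ->
  null_below (c1 `|` c2).
Proof.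
have [[nu0 nuD] _] := nu_cvaluation.
move=> m1 m2 c1null c2null d md dc.
have mdI := MsetI md m1; have mdD := MsetD md m1.
have := nuD _ _ _ _ I I (is_lub_cl mdI mdD) (is_glb_cl mdI mdD).
rewrite (_ : d `&` c1 `|` d `\` c1 = d); last by set_eq_tauto.
rewrite (_ : d `&` c1 `&` (d `\` c1) = set0); last by set_eq_tauto.
have dc1 : nu (cl (d `&` c1)) = 0 by apply: c1null => // t [].
have dc2 : nu (cl (d `\` c1)) = 0.
  by apply: c2null => // t [dt nc1t]; have [] := dc t dt.
by rewrite (nu0 _ is_bot_cl0) dc1 dc2 !addr0 => /esym.
Qed.

Let J := [set cl c | c in [set c | [/\ M c, c `<=` A & null_below c]]].

Let directed_J : directed J.
Proof.
split.
  exists (cl set0), set0 => //; split; [exact: Mset0|by []|].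
  move=> d md d0; have [[nu0 _] _] := nu_cvaluation.
  by apply/nu0/is_bot_cl => //; apply: Nsub0.
move=> _ _ [c1 [m1 c1A c1null] <-] [c2 [m2 c2A c2null] <-].
have m12 := MsetU m1 m2.
exists (cl (c1 `|` c2)); split; [|exact: le_cl_sub|exact: le_cl_sub].
exists (c1 `|` c2) => //; split; [by []|by move=> t [/c1A|/c2A]|].
exact: null_below_setU.
Qed.

(* Every member of S lies below [~` A `|` z] once z bounds J, hence so does the top. *)
Let is_sup_J : is_sup J (cl A).
Proof.
split=> [_ [c [mc cA _] <-]|z zub]; first exact: le_cl_sub.
apply/(le_cl_repP _ mA); have mz := rep_M z.
have mAz : M (~` A `|` rep z) by apply/MsetU/mz/MsetC.
have /(le_clP MsetT mAz) : le (cl setT) (cl (~` A `|` rep z)).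
  apply: supS.2 => y Sy; apply/(le_rep_clP _ mAz).
  have mAy : M (A `&` rep y) by apply/MsetI/rep_M.
  have /(le_cl_repP _ mAy) nAyz : le (cl (A `&` rep y)) z.
    apply: zub; exists (A `&` rep y) => //; split; [exact: mAy|exact: subIsetl|].
    by move=> d md dAy; apply: nu_vanish Sy md dAy.
  by apply: Nsub nAyz _; set_tauto.
by move=> nAz; apply: Nsub nAz _; set_tauto.
Qed.

Lemma continuous_valuation_eq0_local : nu (cl A) = 0.
Proof.
apply: eq0_small => e e0; have [_ nuc] := nu_cvaluation.
have [_ [[c [mc cA cnull] <-] cvg]] :=
  nuc J (cl A) (fun _ _ => I) directed_J is_sup_J e e0.
have := cvg (cl c) (ex_intro2 _ _ c (And3 mc cA cnull) erefl) (mnle_refl _).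
by rewrite (cnull c mc (@subset_refl _ _)) sub0r normrN.
Qed.

End LocalVanishing.

Lemma continuous_valuation_essential (nu : L -> R[i]) : localizable R M N ->
  continuous_valuation nu -> essential R M N (nu \o qmap M N).
Proof.
move=> [_ _ locMN] nu_cval m nu_m.
have [a am nua] : exists2 a : Msub M,
    proj1_sig a `<=` proj1_sig m & nu (cl (proj1_sig a)) <> 0.
  apply: contrapT => nu0; apply: nu_m => a am; rewrite /= qmap_cl.
  by apply: contrapT => nua; apply: nu0; exists a.
have [y [c [Sy mc cay nuc]]] : exists y c, [/\ faithfully_valued y, M c,
    c `<=` proj1_sig a `&` rep y & nu (cl c) <> 0].
  apply: contrapT => nu0; apply/nua/(continuous_valuation_eq0_local nu_cval) => //.
  - exact: locMN is_top_clT.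
  - exact: proj2_sig.
  by move=> y c Sy mc cay; apply: contrapT => nuc; apply: nu0; exists y, c.
have mG : M (proj1_sig a `&` rep y) by apply: MsetI; [apply: proj2_sig|apply: rep_M].
exists (exist _ _ mG); split => /=.
- by move=> t [/am].
- by apply: faithfully_valued_sigma_finite Sy mG _ => t [].
by move=> nu0; apply: nuc; have := nu0 (exist _ c mc) cay; rewrite /= qmap_cl.
Qed.

(** * Essential finite measures give continuous valuations *)

Lemma finite_measure_valuation (mu : Msub M -> R[i]) : finite_measure M N mu ->
  valuation_on setT (extend0 mu \o rep).
Proof.
move=> /finite_measure_extend0 hm.
split=> [z /is_bot_rep /(fm_null hm) //|x y j k _ _ xyj xyk /=].
have mx := rep_M x; have my := rep_M y.
have mU := MsetU mx my; have mI := MsetI mx my.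
rewrite (is_lub_rep xyj) (is_glb_rep xyk).
rewrite -(fm_symdiff hm mU (rep_M _) (symdiff_rep_cl mU)).
rewrite -(fm_symdiff hm mI (rep_M _) (symdiff_rep_cl mI)).
rewrite (fm_setID hm mx my) (_ : rep x `|` rep y = rep y `|` (rep x `\` rep y)).
  by rewrite (fm_setU hm my (MsetD mx my)); [ring|set_eq_tauto].
by set_eq_tauto.
Qed.

Lemma extend0_rep_qmap (mu : Msub M -> R[i]) : finite_measure M N mu ->
  (extend0 mu \o rep) \o qmap M N = mu.
Proof.
move=> /finite_measure_extend0 hm; apply: funext => a /=.
have ma := proj2_sig a; rewrite qmap_cl -extend0_val.
by rewrite (fm_symdiff hm ma (rep_M _) (symdiff_rep_cl ma)).
Qed.

Lemma sigma_finite_faithful_measure G : M G -> sigma_finite_set R M N G ->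
  exists lam : set X -> R[i], finite_measure_fun lam /\
    forall A, M A -> A `<=` G -> (forall c, M c -> c `<=` A -> lam c = 0) -> N A.
Proof.
move=> mG [lam [[lam_null lam_sigma] lam_faithful]].
pose val : Defs.sub_type G -> X := @proj1_sig X G.
have Mpre A : M A -> induced_M M G (val @^-1` A).
  by move=> mA; rewrite /induced_M /= image_val_preimage; apply: MsetI.
exists (fun A => extend0 lam (val @^-1` A)); split.
  split=> [A nA|F mF disjF e e0].
    rewrite (extend0E _ (Mpre _ (N_M nA))); apply: lam_null.
    by rewrite /induced_N /= image_val_preimage; apply: Nsub nA _ => t [].
  have disj_pre i j : i != j -> val @^-1` F i `&` val @^-1` F j = set0.
    by move=> ij; rewrite -preimage_setI disjF // preimage_set0.
  have mU := Mbigcup mF.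
  have [n0 cvg] := lam_sigma (fun i => exist _ _ (Mpre _ (mF i)))
    (exist _ _ (Mpre _ mU)) disj_pre (preimage_bigcup _ _ _) e e0.
  exists n0 => n n0n; rewrite (extend0E _ (Mpre _ mU)).
  under eq_bigr do rewrite (extend0E _ (Mpre _ (mF _))).
  exact: cvg.
move=> A mA AG lamA0.
suff nAG : N (A `&` G) by apply: Nsub nAG _ => t At; split => //; apply: AG.
rewrite -image_val_preimage; apply: (lam_faithful (exist _ _ (Mpre _ mA))) => b /= bA.
have mb : M (val @` proj1_sig b) := proj2_sig b.
have pre_img : val @^-1` (val @` proj1_sig b) = proj1_sig b.
  by apply/seteqP; split=> [u [v bv /sub_type_inj <-] //|u bu]; exists u.
have bA' : val @` proj1_sig b `<=` A by move=> _ [u /bA Au <-].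
have := lamA0 _ mb bA'.
by rewrite pre_img extend0_val.
Qed.

(* The faithful measure of G vanishes on the part of G that the exhaustion misses
   inside each member of I, so that part is negligible below s. *)
Lemma sigma_finite_directed_cover (I : set L) s G : directed I -> is_sup I s ->
  M G -> G `<=` rep s -> sigma_finite_set R M N G ->
  exists w : nat -> set X, [/\ forall n, M (w n), forall n, I (cl (w n)),
    forall n, w n `<=` w n.+1 & N (G `\` \bigcup_n w n)].
Proof.
move=> dirI [_ supI_min] mG Gs.
move=> /(sigma_finite_faithful_measure mG)[lam [hlam lam_faithful]].
have [rho [rho_ge0 rho_setU rho_symdiff rho_dom _ _]] := control_measure_exists hlam.
have [w [mw Iw wS rho_rem]] :=
  directed_exhaustion rho_ge0 rho_setU rho_symdiff dirI mG.
exists w; split => //.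
set W := \bigcup_n w n; have mGW : M (G `\` W) by apply/MsetD/Mbigcup.
have mGWC := MsetC mGW.
have /(le_rep_clP _ mGWC) nsGW : le s (cl (~` (G `\` W))).
  apply: supI_min => x Ix; apply/(le_rep_clP _ mGWC); have mx := rep_M x.
  suff nGWx : N ((G `\` W) `&` rep x) by apply: Nsub nGWx _; set_tauto.
  apply: lam_faithful; [exact: MsetI|by move=> t [[]]|].
  move=> c mc cGWx; have := rho_dom c _ mc (MsetI mGW mx) cGWx.
  by rewrite rho_rem // normr_le0 => /eqP.
by apply: Nsub nsGW _ => t [Gt nWt]; split; [exact: Gs|case].
Qed.

Section ContinuityFromEssential.
Variable mu : Msub M -> R[i].
Hypotheses (mu_fm : finite_measure M N mu) (mu_essential : essential R M N mu).
Variables (rho : set X -> R) (I : set L) (s : L) (w : nat -> set X).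
Hypothesis rho_control : control_measure (extend0 mu) rho.
Hypotheses (dirI : directed I) (supI : is_sup I s).
Hypothesis mw : forall n, M (w n).
Hypothesis rho_remainder :
  forall x, I x -> rho ((rep s `\` \bigcup_n w n) `&` rep x) = 0.

Local Notation m := (extend0 mu).
Local Notation r := (rep s `\` \bigcup_n w n).

Let hm : finite_measure_fun m := finite_measure_extend0 mu_fm.

Let mr : M r. Proof. exact/MsetD/Mbigcup/mw/rep_M. Qed.

Let remainder_member_eq0 c A : M c -> M A -> I (cl A) -> c `<=` r `&` A -> m c = 0.
Proof.
move=> mc mA IA crA; have mx := rep_M (cl A).
rewrite (fm_symdiff hm mc (MsetI mc mx)); last first.
  apply: Nsub (symdiff_rep_cl mA) _ => t.
  by have := crA t; rewrite /symdiff /=; tauto.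
have crAx : c `&` rep (cl A) `<=` r `&` rep (cl A).
  by move=> t [/crA[rt _] xt]; split.
have := control_dominates rho_control (MsetI mc mx) (MsetI mr mx) crAx.
by rewrite rho_remainder // normr_le0 => /eqP.
Qed.

(* A sigma-finite piece of the remainder is, up to a null set, covered by members
   of I, inside which m vanishes; so essentiality forbids any mass there. *)
Lemma essential_remainder_eq0 c : M c -> c `<=` r -> m c = 0.
Proof.
suff mu_r0 : restr_zero mu r by move=> mc cr; rewrite (extend0E _ mc); apply: mu_r0.
apply: contrapT => /(@mu_essential (exist _ _ mr))[[G mG] /= [Gr sfG]]; apply.
have Gs : G `<=` rep s by move=> t /Gr[].
have [w' [mw' Iw' w'S nGW']] := sigma_finite_directed_cover dirI supI mG Gs sfG.
move=> [d md] /= dG; rewrite -extend0_val /=.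
have mdW' := MsetI md (Mbigcup mw').
rewrite (fm_symdiff hm md mdW'); last first.
  by apply: Nsub nGW' _ => t; have := dG t; rewrite /symdiff /=; tauto.
rewrite setI_bigcupr; apply/esym/tends_to_cst_eq.
have := fm_nondecreasing_cvg hm (fun n => MsetI md (mw' n))
  (fun n t dwt => conj dwt.1 (w'S n t dwt.2)).
congr tends_to; apply: funext => n; apply: remainder_member_eq0 (Iw' n) _.
- exact: MsetI.
- exact: mw'.
by move=> t [dt wt]; split; [apply: Gr; apply: dG|].
Qed.

End ContinuityFromEssential.

Lemma control_diff_le (m : set X -> R[i]) rho x s w0 :
  finite_measure_fun m -> control_measure m rho -> M w0 -> le x s ->
  N (w0 `\` rep x) -> `|m (rep x) - m (rep s)| <= (rho (rep s `\` w0))%:C.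
Proof.
move=> hm rhoc mw0 xs nw0x; have mx := rep_M x; have ms := rep_M s.
have nxs : N (rep x `\` rep s) by apply/mnleP.
pose c := rep s `\` (rep x `|` w0); have mc : M c by apply/MsetD/MsetU.
have -> : m (rep x) - m (rep s) = - m c.
  rewrite (fm_symdiff hm mx (MsetI mx ms)); last by apply: Nsub nxs _; set_tauto.
  rewrite (fm_setID hm ms mx) setIC (fm_symdiff hm (MsetD ms mx) mc); first ring.
  by apply: Nsub nw0x _; rewrite /c; set_tauto.
rewrite normrN; apply: (control_dominates rhoc) => //; first exact: MsetD.
by rewrite /c; set_tauto.
Qed.

(* Exhaust rep s by members of I up to W; the remainder carries no rho-mass, so
   rho (rep s `\` w n) = rho (W `\` w n) is small for large n. *)
Lemma finite_measure_continuous (mu : Msub M -> R[i]) :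
  finite_measure M N mu -> essential R M N mu -> continuous_on setT (extend0 mu \o rep).
Proof.
move=> mu_fm mu_ess I s _ dirI supI e /gtc0_real[-> e0].
have hm := finite_measure_extend0 mu_fm; have [rho rhoc] := control_measure_exists hm.
have [rho_ge0 rho_setU] := (control_ge0 rhoc, control_setU rhoc).
have [w [mw Iw wS rho_rem]] :=
  directed_exhaustion rho_ge0 rho_setU (control_symdiff rhoc) dirI (rep_M s).
set W := \bigcup_n w n; have mW : M W := Mbigcup mw.
have mr : M (rep s `\` W) by apply/MsetD/mW/rep_M.
have rho_r0 : rho (rep s `\` W) = 0.
  apply: (control_eq0 rhoc mr).
  exact: (essential_remainder_eq0 mu_fm mu_ess rhoc dirI supI mw rho_rem).
have [n0 cvg] := control_nondecreasing_cvg rhoc mw wS e0.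
exists (cl (w n0)); split=> [|x Ix wx]; first exact: Iw.
have nwx : N (w n0 `\` rep x) by apply/le_cl_repP.
apply: le_lt_trans (control_diff_le hm rhoc (mw n0) (supI.1 x Ix) nwx) _.
have mWw := MsetD mW (mw n0).
have : rho (rep s `\` w n0) <= rho (rep s `\` W) + rho (W `\` w n0).
  apply: le_trans (rho_setU_le rho_ge0 rho_setU mr mWw).
  apply: rho_le => //; [exact/MsetD/mw/rep_M|exact: MsetU|].
  by move=> t [st nwt]; have [Wt|nWt] := pselect (W t); [right|left].
rewrite rho_r0 add0r (rho_setD rho_setU mW (mw n0)) => [|t wt]; last by exists n0.
move: (cvg n0 (leqnn _)); rewrite ltcR ltr_norml => /andP[? ?]; lra.
Qed.

End EnhancedSpace.

Theorem mainTheorem14 (X : Type) (R : realType) (M N : set (set X)) :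
  localizable R M N ->
  [/\ (forall nu : MN M N -> R[i], continuous_valuation nu ->
         finite_measure M N (nu \o qmap M N) /\ essential R M N (nu \o qmap M N)),
      (forall nu1 nu2 : MN M N -> R[i], continuous_valuation nu1 -> continuous_valuation nu2 ->
         nu1 \o qmap M N = nu2 \o qmap M N -> nu1 = nu2) &
      (forall mu : Msub M -> R[i], finite_measure M N mu -> essential R M N mu ->
         exists2 nu : MN M N -> R[i], continuous_valuation nu & nu \o qmap M N = mu)].
Proof.
move=> locMN; have enhMN : enhanced M N by case: locMN.
split.
- move=> nu nu_cval; split; first exact: continuous_valuation_finite_measure.
  exact: continuous_valuation_essential.
- by move=> nu1 nu2 _ _; apply: comp_qmap_inj.
- move=> mu mu_fm mu_ess; exists (extend0 mu \o rep (N:=N)).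
    split; [exact: finite_measure_valuation|exact: finite_measure_continuous].
  exact: extend0_rep_qmap.
Qed.
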